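(* For every graph $G$ of order $n$ and every $2\le k\le n$, $\lambda_k(\overleftrightarrow{G})\ge \lambda_k(G)$. Moreover, this bound is sharp. In particular, $\lambda_2(\overleftrightarrow{G})=\lambda_2(G)$.
   Context: Graphs are finite simple undirected. $\overleftrightarrow{G}$ is the symmetric digraph obtained from $G$ by replacing each edge $xy$ by the two arcs $xy$ and $yx$. For a graph $G$ and $S\subseteq V(G)$ with $|S|\ge 2$, an $S$-tree is a subtree of $G$ containing $S$; $\lambda_S(G)$ is the maximum number of pairwise edge-disjoint $S$-trees, and $\lambda_k(G)=\min\{\lambda_S(G):S\subseteq V(G),|S|=k\}$ (generalized $k$-edge-connectivity; $\lambda_2(G)$ is the edge-connectivity). For a digraph $D$ and $S\subseteq V(D)$, $\lambda_S(D)$ is the maximum number of pairwise arc-disjoint strong subgraphs of $D$ containing $S$, and $\lambda_k(D)=\min\{\lambda_S(D): S\subseteq V(D), |S|=k\}$. *)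

From mathcomp Require Import all_boot.
Set Implicit Arguments. Unset Strict Implicit. Unset Printing Implicit Defensive.

(* A finite simple graph G on vertex type T is an adjacency relation
   e : rel T that is symmetric and irreflexive (hypotheses in the theorem).
   Its order is #|T|. *)

Section Defs.
Variable T : finType.
Variable e : rel T.

Definition gedges : {set {set T}} :=
  [set f : {set T} | [exists x, exists y, e x y && (f == [set x; y])]].

Definition edge_rel (F : {set {set T}}) : rel T :=
  fun x y => (x != y) && ([set x; y] \in F).

Definition is_subgraph (V : {set T}) (F : {set {set T}}) : bool :=
  (F \subset gedges) && [forall f in F, f \subset V].

Definition sg_connected (V : {set T}) (F : {set {set T}}) : bool :=
  [forall x in V, forall y in V, connect (edge_rel F) x y].

(* (V,F) has no cycle: no sequence of m >= 3 distinct vertices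
   v_0 ... v_(m-1) with v_i v_(i+1) and v_(m-1) v_0 edges of F.
   (A cycle has at most #|T| vertices.) *)
Definition sg_acyclic (F : {set {set T}}) : bool :=
  ~~ [exists m : 'I_(#|T|.+1), exists c : m.-tuple T,
        (2 < m) && ucycleb (edge_rel F) c].

Definition is_Stree (S V : {set T}) (F : {set {set T}}) : bool :=
  [&& is_subgraph V F, sg_connected V F, sg_acyclic F & S \subset V].

Definition tree_packing (S : {set T}) (m : nat) : bool :=
  [exists f : {ffun 'I_m -> {set T} * {set {set T}}},
     [forall i, is_Stree S (f i).1 (f i).2] &&
     [forall i, forall j, (i != j) ==> [disjoint (f i).2 & (f j).2]]].

(* lambda_S(G): maximum number of pairwise edge-disjoint S-trees.
   (Each S-tree with |S| >= 2 has an edge, so this number is <= #|E(G)|.) *)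
Definition lamS_G (S : {set T}) : nat :=
  \max_(m < #|gedges|.+1 | tree_packing S m) m.

Definition lamk_G (k : nat) : nat :=
  \big[minn/#|gedges|]_(S : {set T} | #|S| == k) lamS_G S.

(* The symmetric digraph of G: arcs (x,y) and (y,x) for each edge xy. *)
Definition darcs : {set T * T} := [set p : T * T | e p.1 p.2].

Definition is_strong_sub (V : {set T}) (A : {set T * T}) : bool :=
  [&& A \subset darcs, [forall a in A, (a.1 \in V) && (a.2 \in V)] &
      [forall x in V, forall y in V, connect (fun u v => (u, v) \in A) x y]].

Definition strong_packing (S : {set T}) (m : nat) : bool :=
  [exists f : {ffun 'I_m -> {set T} * {set T * T}},
     [forall i, is_strong_sub (f i).1 (f i).2 && (S \subset (f i).1)] &&
     [forall i, forall j, (i != j) ==> [disjoint (f i).2 & (f j).2]]].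

(* lambda_S(D): maximum number of pairwise arc-disjoint strong subgraphs
   containing S (each has an arc when |S| >= 2, so it is <= #|A(D)|). *)
Definition lamS_D (S : {set T}) : nat :=
  \max_(m < #|darcs|.+1 | strong_packing S m) m.

Definition lamk_D (k : nat) : nat :=
  \big[minn/#|darcs|]_(S : {set T} | #|S| == k) lamS_D S.

Definition g_connected : bool := [forall x, forall y, connect e x y].

End Defs.

(* An S-tree of G with each edge taken in both directions is a strong subgraph of
   the symmetric digraph D, hence lambda_k(G) <= lambda_k(D).  Conversely, for
   S = {x, y}, m arc-disjoint strong subgraphs contain m arc-disjoint simple x->y
   paths.  Their union is a 0/1 flow of value m from x to y; cancelling the pairs
   of opposite arcs keeps it a flow of value m, which splits again into m
   arc-disjoint x->y paths.  These use no edge of G in both directions, so their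
   underlying edge sets are disjoint, and each contains an {x, y}-tree.
   Sharpness: in a star, a leaf in S has a single out-arc, which every strong
   subgraph containing S must use, so lambda_k(D) <= 1 <= lambda_k(G). *)

From mathcomp Require Import all_boot order.
Set Implicit Arguments. Unset Strict Implicit. Unset Printing Implicit Defensive.
Import Order.TTheory.

Lemma set2_eq_cases (T : finType) (x y a b : T) : [set x; y] = [set a; b] ->
  (x = a /\ y = b) \/ (x = b /\ y = a).
Proof.
move=> E.
have xab : x \in [set a; b] by rewrite -E set21.
have yab : y \in [set a; b] by rewrite -E set22.
have axy : a \in [set x; y] by rewrite E set21.
have bxy : b \in [set x; y] by rewrite E set22.
move: xab yab axy bxy; rewrite !inE.
by do 4 (case/orP=> /eqP ?); subst; auto.
Qed.

Lemma connect_step (T : finType) (r : rel T) x y :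
  connect r x y -> x != y -> exists z, r x z.
Proof.
move/connectP=> [[|z p] /= xp ->]; first by rewrite eqxx.
by case/andP: xp => xz _ _; exists z.
Qed.

Lemma connect_uniq_path (T : finType) (r : rel T) x y : connect r x y -> x != y ->
  exists2 p, path r x p & [/\ uniq (x :: p), last x p = y & p != [::]].
Proof.
move=> /connectP[p xp ->] xy; case/shortenP: xp xy => q xq uq _ xy.
by exists q => //; split=> //; apply: contraNneq xy => ->; rewrite /= eqxx.
Qed.

Lemma card_le_disjoint_family (I U : finType) (F : I -> {set U}) (E : {set U}) :
  (forall i, F i != set0) -> (forall i, F i \subset E) ->
  (forall i j, i != j -> [disjoint F i & F j]) -> #|I| <= #|E|.
Proof.
move=> F0 FE Fdisj.
have [g gF] := fin_all_exists (fun i => set0Pn _ (F0 i)).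
have g_inj : injective g.
  move=> i j gij; apply/eqP/negPn/negP => /Fdisj/disjointFr/(_ (gF i)).
  by rewrite gij gF.
rewrite -cardsT -(card_imset _ g_inj); apply/subset_leq_card/subsetP.
by move=> _ /imsetP[i _ ->]; apply: subsetP (FE i) _ (gF i).
Qed.

Definition arc_rel (T : finType) (A : {set T * T}) : rel T := fun u w => (u, w) \in A.

Definition arc_count (T : finType) (f : T * T -> T) (A : {set T * T}) (v : T) :=
  \sum_(a in A) (f a == v).

Notation outdeg := (arc_count fst).
Notation indeg := (arc_count snd).

Section Flows.
Variable T : finType.
Implicit Types (A B : {set T * T}) (x y v : T) (p : seq T).

Lemma arc_countU1 f a A v : a \notin A ->
  arc_count f (a |: A) v = (f a == v) + arc_count f A v.
Proof. exact: big_setU1. Qed.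

Lemma arc_count_setID f A B v :
  arc_count f A v = arc_count f (A :&: B) v + arc_count f (A :\: B) v.
Proof. exact: big_setID. Qed.

Lemma arc_count_bigcup (I : finType) (A : I -> {set T * T}) f v :
  (forall i j, i != j -> [disjoint A i & A j]) ->
  arc_count f (\bigcup_i A i) v = \sum_i arc_count f (A i) v.
Proof. exact: partition_disjoint_bigcup. Qed.

Lemma outdeg_eq_indeg_swap_closed A v :
  {in A, forall a, swap_pair a \in A} -> outdeg A v = indeg A v.
Proof.
move=> swapA; rewrite /arc_count (reindex_inj (can_inj swap_pairK)) /=.
by apply: eq_bigl => a; apply/idP/idP => [/swapA | /swapA]; rewrite ?swap_pairK.
Qed.

Definition flow_atleast x y m A :=
  (forall v, v != x -> v != y -> outdeg A v = indeg A v) /\ indeg A x + m <= outdeg A x.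

Lemma sum_eq_mem (R : {set T}) u : \sum_(v in R) (u == v) = (u \in R).
Proof.
rewrite big_mkcond (bigD1 u) //= eqxx big1 ?addn0; first by case: (u \in R).
by move=> v /negbTE; rewrite eq_sym => ->; case: (v \in R).
Qed.

(* Sum the degrees over the set R of vertices reachable from x: no arc leaves R,
   so its total in-degree is at least its total out-degree, while x has positive
   excess and, if y is not in R, all other vertices of R are balanced. *)
Lemma flow_connect x y m A : 0 < m -> flow_atleast x y m A -> connect (arc_rel A) x y.
Proof.
move=> m_gt0 [bal exc]; apply/idPn => not_xy.
pose R := [set v | connect (arc_rel A) x v].
have deg_R f : \sum_(v in R) arc_count f A v = \sum_(a in A) (f a \in R).
  by rewrite exchange_big; apply: eq_bigr => a _; rewrite sum_eq_mem.
have out_le_in : \sum_(a in A) (a.1 \in R) <= \sum_(a in A) (a.2 \in R).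
  apply: leq_sum => a aA; case: (boolP (a.1 \in R)) => //; rewrite !inE => xa1.
  by rewrite (connect_trans xa1) // connect1 // /arc_rel -surjective_pairing.
have xR : x \in R by rewrite inE connect0.
have : \sum_(v in R) indeg A v < \sum_(v in R) outdeg A v.
  rewrite (bigD1 x) //= [ltnRHS](bigD1 x) //= -addSn; apply: leq_add.
    by apply: leq_trans exc; rewrite -addn1 leq_add2l.
  apply: leq_sum => v /andP[vR vx]; rewrite bal //.
  by apply: contraNneq not_xy => <-; rewrite inE in vR.
by rewrite !deg_R ltnNge out_le_in.
Qed.

Fixpoint path_arcs x p : {set T * T} :=
  if p is z :: p' then (x, z) |: path_arcs z p' else set0.

Lemma path_arcs_subset A x p : path (arc_rel A) x p -> path_arcs x p \subset A.
Proof.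
elim: p x => [|z p IH] x /=; first by rewrite sub0set.
by case/andP=> xz /IH sub; rewrite subUset sub1set sub andbT.
Qed.

Lemma connect_path_arcs x p : connect (arc_rel (path_arcs x p)) x (last x p).
Proof.
apply/connectP; exists p => //.
elim: p x => [|z p IH] x //=; rewrite /arc_rel setU11 /=.
by apply: sub_path (IH z) => u w; rewrite /arc_rel inE => ->; rewrite orbT.
Qed.

Lemma path_arcs_fst x p a : a \in path_arcs x p -> a.1 \in x :: p.
Proof.
elim: p x => [|z p IH] x /=; first by rewrite inE.
by case/setU1P => [-> | /IH za]; [exact: mem_head | rewrite in_cons za orbT].
Qed.

Lemma outdeg_path_arcs x p v : uniq (x :: p) ->
  outdeg (path_arcs x p) v = (v \in belast x p).
Proof.
elim: p x => [|z p IH] x /=; first by rewrite /arc_count big_set0.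
case/andP=> x_zp uq.
have new_arc : (x, z) \notin path_arcs z p by apply: contra x_zp => /path_arcs_fst.
rewrite arc_countU1 // IH // in_cons /= eq_sym.
case: (eqVneq v x) => [->|_] /=; last by rewrite add0n.
by rewrite (contraNF (@mem_belast _ _ _ x) x_zp).
Qed.

Lemma indeg_path_arcs x p v : uniq (x :: p) -> indeg (path_arcs x p) v = (v \in p).
Proof.
elim: p x => [|z p IH] x /=; first by rewrite /arc_count big_set0.
case/andP=> x_zp uq; have [z_p _] := andP uq.
have new_arc : (x, z) \notin path_arcs z p by apply: contra x_zp => /path_arcs_fst.
rewrite arc_countU1 // IH // in_cons /= eq_sym.
case: (eqVneq v z) => [->|_] /=; last by rewrite add0n.
by rewrite (negbTE z_p).
Qed.

Lemma path_arcs_source x p : uniq (x :: p) -> p != [::] ->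
  outdeg (path_arcs x p) x = 1 /\ indeg (path_arcs x p) x = 0.
Proof.
move=> uq; rewrite outdeg_path_arcs // indeg_path_arcs //.
by case: p uq => //= z p /andP[x_zp _] _; rewrite mem_head (negbTE x_zp).
Qed.

Lemma path_arcs_balanced x p v : uniq (x :: p) -> v != x -> v != last x p ->
  outdeg (path_arcs x p) v = indeg (path_arcs x p) v.
Proof.
move=> uq vx vl; rewrite outdeg_path_arcs // indeg_path_arcs //.
have := congr1 (fun s => v \in s) (lastI x p).
by rewrite /= in_cons (negbTE vx) mem_rcons in_cons (negbTE vl) /= => ->.
Qed.

Lemma path_arcs_flow x p : uniq (x :: p) -> p != [::] ->
  flow_atleast x (last x p) 1 (path_arcs x p).
Proof.
move=> uq p0; have [out_x in_x] := path_arcs_source uq p0.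
by split=> [v vx vl|]; [exact: path_arcs_balanced | rewrite out_x in_x].
Qed.

Lemma flow_bigcup x y (I : finType) (A : I -> {set T * T}) :
  (forall i j, i != j -> [disjoint A i & A j]) ->
  (forall i, flow_atleast x y 1 (A i)) -> flow_atleast x y #|I| (\bigcup_i A i).
Proof.
move=> disj flowA; split=> [v vx vy|]; rewrite !arc_count_bigcup //.
  by apply: eq_bigr => i _; case: (flowA i) => bal _; apply: bal.
by rewrite -sum1_card -big_split; apply: leq_sum => i _; case: (flowA i).
Qed.

Lemma flow_setD_path x p m A : uniq (x :: p) -> p != [::] -> path_arcs x p \subset A ->
  flow_atleast x (last x p) m.+1 A -> flow_atleast x (last x p) m (A :\: path_arcs x p).
Proof.
move=> uq p0 PA [bal exc]; set P := path_arcs x p.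
have split_deg f v : arc_count f A v = arc_count f P v + arc_count f (A :\: P) v.
  by rewrite (arc_count_setID f A P) (setIidPr PA).
have [out_x in_x] := path_arcs_source uq p0.
split=> [v vx vl|]; last by move: exc; rewrite !split_deg out_x in_x add0n addnS add1n.
by have := bal v vx vl; rewrite !split_deg path_arcs_balanced //; apply: addnI.
Qed.

Lemma flow_arc_disjoint_paths x y m A : x != y -> flow_atleast x y m A ->
  exists C : 'I_m -> {set T * T},
    [/\ forall i, C i \subset A, forall i j, i != j -> [disjoint C i & C j]
      & forall i, connect (arc_rel (C i)) x y].
Proof.
move=> xy; elim: m A => [|m IH] A flowA; first by exists (fun=> set0); split; case.
have [p pA [uq ylast p0]] := connect_uniq_path (flow_connect (ltn0Sn m) flowA) xy.
subst y; have PA := path_arcs_subset pA.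
have [C [CA Cdisj Cconn]] := IH _ (flow_setD_path uq p0 PA flowA).
have CP j : [disjoint C j & path_arcs x p].
  by apply: disjointWl (CA j) _; rewrite disjoints_subset setDE subsetIr.
exists (fun i => if unlift ord_max i is Some j then C j else path_arcs x p); split.
- move=> i; case: (unliftP ord_max i) => [j _|_] //.
  exact: subset_trans (CA j) (subsetDl _ _).
- move=> i j; case: (unliftP ord_max i) => [i' ->|->];
    case: (unliftP ord_max j) => [j' ->|->] //; last by rewrite eqxx.
  + by move=> ij; apply: Cdisj; apply: contraNneq ij => ->.
  + by rewrite disjoint_sym.
- move=> i; case: (unliftP ord_max i) => [j _|_]; [exact: Cconn | exact: connect_path_arcs].
Qed.

Definition drop_opposite A := A :\: swap_pair @^-1: A.

Lemma drop_opposite_antisym A :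
  {in drop_opposite A, forall a, swap_pair a \notin drop_opposite A}.
Proof. by move=> a; rewrite !inE swap_pairK => /andP[/negbTE -> _]; rewrite andbF. Qed.

(* The cancelled arcs contribute equally to in- and out-degrees. *)
Lemma flow_drop_opposite x y m A :
  flow_atleast x y m A -> flow_atleast x y m (drop_opposite A).
Proof.
case=> bal exc; set Q := A :&: swap_pair @^-1: A.
have Q_bal v : outdeg Q v = indeg Q v.
  by apply: outdeg_eq_indeg_swap_closed => a; rewrite !inE swap_pairK andbC.
have split_deg f v := arc_count_setID f A (swap_pair @^-1: A) v.
split=> [v vx vy|]; last by move: exc; rewrite !split_deg Q_bal -addnA leq_add2l.
by have := bal v vx vy; rewrite !split_deg Q_bal; apply: addnI.
Qed.

Definition edges_of_arcs A : {set {set T}} := [set [set a.1; a.2] | a in A].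

Lemma disjoint_edges_of_arcs B A1 A2 :
  {in B, forall a, swap_pair a \notin B} -> A1 \subset B -> A2 \subset B ->
  [disjoint A1 & A2] -> [disjoint edges_of_arcs A1 & edges_of_arcs A2].
Proof.
move=> antiB A1B A2B A12; rewrite disjoints_subset; apply/subsetP => _ /imsetP[a aA1 ->].
rewrite inE; apply/negP => /imsetP[b bA2 /set2_eq_cases[[ab1 ab2]|[ab1 ab2]]].
  have ab : a = b by rewrite [a]surjective_pairing [b]surjective_pairing ab1 ab2.
  by move: (disjointFr A12 aA1); rewrite ab bA2.
have ba : swap_pair b = a by rewrite [a]surjective_pairing ab1 ab2.
by have := antiB b (subsetP A2B b bA2); rewrite ba (subsetP A1B a aA1).
Qed.

End Flows.

Section Packings.
Variables (T : finType) (e : rel T).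
Hypotheses (e_sym : symmetric e) (e_irr : irreflexive e).
Implicit Types (S V : {set T}) (F : {set {set T}}) (A : {set T * T}).

Lemma edge_rel_sym F : symmetric (edge_rel F).
Proof. by move=> x y; rewrite /edge_rel eq_sym setUC. Qed.

Lemma mem_gedges x y : ([set x; y] \in gedges e) = e x y.
Proof.
apply/idP/idP => [|xy]; last first.
  by rewrite inE; apply/existsP; exists x; apply/existsP; exists y; rewrite xy eqxx.
rewrite inE => /existsP[a /existsP[b /andP[ab /eqP/set2_eq_cases]]].
by case=> [[-> ->]|[-> ->]]; rewrite // e_sym.
Qed.

Lemma edge_rel_gedges : edge_rel (gedges e) =2 e.
Proof. by move=> x y; rewrite /edge_rel mem_gedges; case: eqVneq => // ->; rewrite e_irr. Qed.

Lemma is_subgraphS V F F' : F' \subset F -> is_subgraph e V F -> is_subgraph e V F'.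
Proof.
move=> F'F /andP[FE /forall_inP FV]; rewrite /is_subgraph (subset_trans F'F FE).
by apply/forall_inP => f /(subsetP F'F); apply: FV.
Qed.

Lemma sg_connectedP V F :
  reflect {in V &, forall x y, connect (edge_rel F) x y} (sg_connected V F).
Proof.
apply: (iffP forall_inP) => [conn x y xV yV | conn x xV].
  exact: forall_inP (conn x xV) y yV.
by apply/forall_inP => y yV; apply: conn.
Qed.

(* The rest of the cycle c0 c1 c2 ... joins c1 back to c0 without the edge c0c1. *)
Lemma ucycle_removable_edge F c : 2 < size c -> ucycleb (edge_rel F) c ->
  exists a b, edge_rel F a b /\ connect (edge_rel (F :\ [set a; b])) a b.
Proof.
case: c => [|c0 [|c1 [|c2 c]]] // _ /andP[].
rewrite (cycle_path c0) => /and4P[lc0 c01 c12 c2c] uq.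
exists c0, c1; split=> //; rewrite (sym_connect_sym (@edge_rel_sym _)).
apply/connectP; exists (c2 :: rcons c c0); last by rewrite /= last_rcons.
move: uq; rewrite /= !inE !negb_or.
case/andP=> /and3P[c0c1 c0c2 _] /andP[/andP[c1c2 c1c] _].
have c1_c2c : c1 \notin c2 :: c by rewrite in_cons negb_or c1c2.
have keep a b : a != c1 -> b != c1 -> edge_rel F a b -> edge_rel (F :\ [set c0; c1]) a b.
  move=> ac1 bc1 /andP[ab abF]; rewrite /edge_rel in_setD1 ab abF andbT.
  apply/eqP => abc; have : c1 \in [set a; b] by rewrite abc set22.
  by rewrite !inE eq_sym (negbTE ac1) eq_sym (negbTE bc1).
apply/andP; split.
  rewrite /edge_rel in_setD1; case/andP: c12 => -> ->; rewrite andbT.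
  by apply/eqP => /set2_eq_cases[[c10 _]|[_ c20]]; [move: c0c1 | move: c0c2];
     rewrite ?c10 ?c20 eqxx.
rewrite rcons_path; apply/andP; split.
  apply: (sub_in_path (P := predC1 c1)) c2c; first by move=> a b; apply: keep.
  by apply/allP => z zc; apply: contraNneq c1_c2c => <-.
apply: keep lc0 => //; apply: contraNneq c1_c2c => /= <-; exact: mem_last.
Qed.

Lemma connect_setD1_edge F a b u w : connect (edge_rel (F :\ [set a; b])) a b ->
  connect (edge_rel F) u w -> connect (edge_rel (F :\ [set a; b])) u w.
Proof.
move=> ab; apply: connect_sub => x y.
case: (eqVneq [set x; y] [set a; b]) => [/set2_eq_cases[[-> ->]|[-> ->]] _ //|xy_ab].
  by rewrite (sym_connect_sym (@edge_rel_sym _)).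
by case/andP=> xy xyF; apply: connect1; rewrite /edge_rel in_setD1 xy xy_ab xyF.
Qed.

(* A minimal connected spanning edge set has no cycle, since a cycle edge is removable. *)
Lemma connected_subgraph_tree V F : is_subgraph e V F -> sg_connected V F ->
  exists2 F' : {set {set T}}, F' \subset F &
    [&& is_subgraph e V F', sg_connected V F' & sg_acyclic F'].
Proof.
move=> subF connF.
pose P (G : {set {set T}}) := is_subgraph e V G && sg_connected V G.
have [F' minF' F'F] := @minset_exists _ P F (introT andP (conj subF connF)).
have /andP[subF' connF'] := minsetp minF'.
exists F' => //; rewrite subF' connF' /=.
apply/negP => /existsP[m /existsP[c /andP[m_gt2 cyc]]].
have c_gt2 : 2 < size c by rewrite size_tuple.
have [a [b [ab conn_ab]]] := ucycle_removable_edge c_gt2 cyc.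
have P_ab : P (F' :\ [set a; b]).
  rewrite /P (is_subgraphS (subD1set _ _) subF').
  apply/sg_connectedP => u w uV wV; apply: connect_setD1_edge conn_ab _.
  exact: (sg_connectedP _ _ connF').
have /setP/(_ [set a; b]) := minsetinf minF' P_ab (subD1set _ _).
by rewrite setD11; case/andP: ab => _ ->.
Qed.

Lemma connect_Stree F x y : F \subset gedges e -> connect (edge_rel F) x y ->
  exists2 VF : {set T} * {set {set T}}, VF.2 \subset F & is_Stree e [set x; y] VF.1 VF.2.
Proof.
move=> FE /connectP[p xp ->].
pose V := [set v in x :: p]; pose F1 := [set f in F | f \subset V].
have F1F : F1 \subset F by apply/subsetP => f; rewrite inE => /andP[].
have subF1 : is_subgraph e V F1.
  rewrite /is_subgraph (subset_trans F1F FE).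
  by apply/forall_inP => f; rewrite inE => /andP[].
have xp1 : path (edge_rel F1) x p.
  apply: (sub_in_path (P := mem V)) xp.
    move=> a b aV bV /andP[ab abF]; rewrite /edge_rel inE ab abF /=.
    by rewrite subUset !sub1set aV bV.
  by apply/allP => z zp; change (z \in V); rewrite in_set.
have connF1 : sg_connected V F1.
  have x_to u : u \in V -> connect (edge_rel F1) x u by rewrite inE; apply: path_connect.
  apply/sg_connectedP => u w uV wV; apply: connect_trans (x_to w wV).
  by rewrite (sym_connect_sym (@edge_rel_sym _)); apply: x_to.
have [F2 F2F1 /and3P[subF2 connF2 acF2]] := connected_subgraph_tree subF1 connF1.
exists (V, F2); first exact: subset_trans F2F1 F1F.
by rewrite /is_Stree subF2 connF2 acF2 subUset !sub1set !in_set mem_head mem_last.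
Qed.


Lemma tree_packingP S m : reflect
  (exists f : 'I_m -> {set T} * {set {set T}}, (forall i, is_Stree e S (f i).1 (f i).2) /\
     forall i j, i != j -> [disjoint (f i).2 & (f j).2])
  (tree_packing e S m).
Proof.
apply: (iffP existsP) => [[f /andP[/forallP fS /forallP fdisj]]|[f [fS fdisj]]].
  by exists f; split=> // i j; apply/implyP/(forallP (fdisj i) j).
exists (finfun f); apply/andP; split; apply/forallP => i; first by rewrite ffunE.
by apply/forallP => j; apply/implyP; rewrite !ffunE; apply: fdisj.
Qed.

Lemma strong_packingP S m : reflect
  (exists f : 'I_m -> {set T} * {set T * T},
     (forall i, is_strong_sub e (f i).1 (f i).2 && (S \subset (f i).1)) /\
     forall i j, i != j -> [disjoint (f i).2 & (f j).2])
  (strong_packing e S m).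
Proof.
apply: (iffP existsP) => [[f /andP[/forallP fS /forallP fdisj]]|[f [fS fdisj]]].
  by exists f; split=> // i j; apply/implyP/(forallP (fdisj i) j).
exists (finfun f); apply/andP; split; apply/forallP => i; first by rewrite ffunE.
by apply/forallP => j; apply/implyP; rewrite !ffunE; apply: fdisj.
Qed.

Definition arcs_of_edges F : {set T * T} := [set a | edge_rel F a.1 a.2].

Lemma Stree_strong_sub S V F : is_Stree e S V F -> is_strong_sub e V (arcs_of_edges F).
Proof.
case/and4P => /andP[FE /forall_inP FV] /sg_connectedP conn _ _; apply/and3P; split.
- by apply/subsetP => a; rewrite !inE => /andP[_ aF]; rewrite -mem_gedges (subsetP FE).
- apply/forall_inP => a; rewrite inE => /andP[_ aF].
  by rewrite !(subsetP (FV _ aF)) ?set21 ?set22.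
- apply/forall_inP => u uV; apply/forall_inP => w wV.
  by apply: connect_sub (conn u w uV wV) => a b ab; apply: connect1; rewrite inE.
Qed.

Lemma tree_packing_strong_packing S m : tree_packing e S m -> strong_packing e S m.
Proof.
case/tree_packingP => f [fS fdisj]; apply/strong_packingP.
exists (fun i => ((f i).1, arcs_of_edges (f i).2)); split=> [i|i j /fdisj ij] /=.
  by rewrite (Stree_strong_sub (fS i)); case/and4P: (fS i).
rewrite disjoints_subset; apply/subsetP => a; rewrite !inE => /andP[_ aFi].
by apply/negP => /andP[_]; rewrite (disjointFr ij aFi).
Qed.

Lemma Stree_has_edge S V F : 1 < #|S| -> is_Stree e S V F -> F != set0.
Proof.
case/card_gt1P => x [y [xS yS xy]] /and4P[_ /sg_connectedP conn _ /subsetP SV].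
have [w /andP[_ xwF]] := connect_step (conn x y (SV x xS) (SV y yS)) xy.
by apply/set0Pn; exists [set x; w].
Qed.

Lemma tree_packing_le_card S m : 1 < #|S| -> tree_packing e S m -> m <= #|gedges e|.
Proof.
move=> S_gt1 /tree_packingP[f [fS fdisj]]; rewrite -[m]card_ord.
apply: (card_le_disjoint_family (F := fun i => (f i).2)) fdisj => i.
  exact: Stree_has_edge S_gt1 (fS i).
by case/and4P: (fS i) => /andP[].
Qed.

Lemma edges_of_arcs_sub A : A \subset darcs e -> edges_of_arcs A \subset gedges e.
Proof.
move=> AD; apply/subsetP => _ /imsetP[a aA ->]; rewrite mem_gedges.
by have := subsetP AD a aA; rewrite inE.
Qed.

Lemma connect_edges_of_arcs A u w : A \subset darcs e -> connect (arc_rel A) u w ->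
  connect (edge_rel (edges_of_arcs A)) u w.
Proof.
move=> AD; apply: connect_sub => a b ab; apply: connect1.
have eab : e a b by have := subsetP AD _ ab; rewrite inE.
apply/andP; split; first by apply: contraTneq eab => ->; rewrite e_irr.
by apply/imsetP; exists (a, b).
Qed.

Lemma edge_disjoint_tree_packing x y m (F : 'I_m -> {set {set T}}) :
  (forall i, F i \subset gedges e) -> (forall i, connect (edge_rel (F i)) x y) ->
  (forall i j, i != j -> [disjoint F i & F j]) -> tree_packing e [set x; y] m.
Proof.
move=> FE Fconn Fdisj.
have [t tF tS] := fin_all_exists2 (fun i => connect_Stree (FE i) (Fconn i)).
apply/tree_packingP; exists t; split=> // i j ij.
exact: disjointW (tF i) (tF j) (Fdisj i j ij).
Qed.

Lemma strong_packing_flow x y m : x != y -> strong_packing e [set x; y] m ->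
  exists2 A : {set T * T}, A \subset darcs e & flow_atleast x y m A.
Proof.
move=> xy /strong_packingP[f [fS fdisj]].
have paths i : exists2 p, path (arc_rel (f i).2) x p &
    [/\ uniq (x :: p), last x p = y & p != [::]].
  have /andP[/and3P[_ _ /forall_inP conn] /subsetP Sf] := fS i.
  exact: connect_uniq_path (forall_inP (conn x (Sf x (set21 x y))) y (Sf y (set22 x y))) xy.
have [p pf puq] := fin_all_exists2 paths.
exists (\bigcup_i path_arcs x (p i)).
  apply/bigcupsP => i _; have /andP[/and3P[fD _ _] _] := fS i.
  exact: subset_trans (path_arcs_subset (pf i)) fD.
rewrite -[X in flow_atleast _ _ X](card_ord m); apply: flow_bigcup => [i j ij|i].
  exact: disjointW (path_arcs_subset (pf i)) (path_arcs_subset (pf j)) (fdisj i j ij).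
by have [uq <- p0] := puq i; apply: path_arcs_flow.
Qed.

Lemma strong_packing2_tree_packing x y m : x != y ->
  strong_packing e [set x; y] m -> tree_packing e [set x; y] m.
Proof.
move=> xy /(strong_packing_flow xy)[A AD /flow_drop_opposite flowB].
have [C [CB Cdisj Cconn]] := flow_arc_disjoint_paths xy flowB.
have BD : drop_opposite A \subset darcs e := subset_trans (subsetDl _ _) AD.
apply: (edge_disjoint_tree_packing (F := fun i => edges_of_arcs (C i))) => [i|i|i j ij].
- exact: edges_of_arcs_sub (subset_trans (CB i) BD).
- exact: connect_edges_of_arcs (subset_trans (CB i) BD) (Cconn i).
- exact: disjoint_edges_of_arcs (@drop_opposite_antisym _ A) (CB i) (CB j) (Cdisj i j ij).
Qed.

Lemma leq_lamS_G S m : tree_packing e S m -> m <= #|gedges e| -> m <= lamS_G e S.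
Proof. by move=> tp m_le; rewrite -ltnS in m_le; apply: (leq_bigmax_cond (Ordinal m_le)). Qed.

Lemma leq_lamS_D S m : strong_packing e S m -> m <= #|darcs e| -> m <= lamS_D e S.
Proof. by move=> sp m_le; rewrite -ltnS in m_le; apply: (leq_bigmax_cond (Ordinal m_le)). Qed.

Lemma lamS_G_le_card S : lamS_G e S <= #|gedges e|.
Proof. by apply/bigmax_leqP => m _; rewrite -ltnS. Qed.

Lemma card_gedges_le_darcs : #|gedges e| <= #|darcs e|.
Proof.
apply: (@leq_trans #|edges_of_arcs (darcs e)|); last exact: leq_imset_card.
apply/subset_leq_card/subsetP => f; rewrite inE => /existsP[x /existsP[y /andP[xy /eqP ->]]].
by apply/imsetP; exists (x, y); rewrite ?inE.
Qed.

Lemma lamS_G_le_D S : lamS_G e S <= lamS_D e S.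
Proof.
apply/bigmax_leqP => m tp; apply: leq_lamS_D (tree_packing_strong_packing tp) _.
by rewrite -ltnS (leq_trans (ltn_ord m)) // ltnS card_gedges_le_darcs.
Qed.

Lemma lamS_D_le_G2 x y : x != y -> lamS_D e [set x; y] <= lamS_G e [set x; y].
Proof.
move=> xy; apply/bigmax_leqP => m /(strong_packing2_tree_packing xy) tp.
by apply: leq_lamS_G tp (tree_packing_le_card _ tp); rewrite cards2 xy.
Qed.

Lemma lamk_G_le_D k : lamk_G e k <= lamk_D e k.
Proof.
apply: (le_bigmin (T := nat)) => [|S Sk].
  exact: leq_trans (bigmin_le_id (T := nat) _ _ _ _) card_gedges_le_darcs.
exact: leq_trans (bigmin_le_cond (T := nat) _ _ Sk) (lamS_G_le_D S).
Qed.

Lemma lamk_D2 : 1 < #|T| -> lamk_D e 2 = lamk_G e 2.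
Proof.
move=> T_gt1; apply/eqP; rewrite eqn_leq lamk_G_le_D andbT.
have pair_le S : #|S| == 2 -> lamS_D e S <= lamS_G e S.
  by case/cards2P => x [y [xy ->]]; apply: lamS_D_le_G2.
have [x [y [_ _ xy]]] := card_gt1P T_gt1.
have xy2 : #|[set x; y]| == 2 by rewrite cards2 xy.
apply: (le_bigmin (T := nat)) => [|S S2].
  apply: leq_trans (bigmin_le_cond (T := nat) _ _ xy2) _.
  exact: leq_trans (pair_le _ xy2) (lamS_G_le_card _).
exact: leq_trans (bigmin_le_cond (T := nat) _ _ S2) (pair_le S S2).
Qed.

(* Every strong subgraph containing [S] uses the only arc leaving [u]. *)
Lemma pendant_lamS_D_le1 S u v c : u \in S -> v \in S -> u != v ->
  (forall w, e u w -> w = c) -> lamS_D e S <= 1.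
Proof.
move=> uS vS uv pend; apply/bigmax_leqP => m /strong_packingP[f [fS fdisj]].
rewrite leqNgt; apply/negP => m_gt1.
have ucA i : (u, c) \in (f i).2.
  have /andP[/and3P[AD _ /forall_inP conn] /subsetP SV] := fS i.
  have [w uwA] := connect_step (forall_inP (conn u (SV u uS)) v (SV v vS)) uv.
  by have := subsetP AD _ uwA; rewrite inE => /pend <-.
have := fdisj (Ordinal (ltnW m_gt1)) (Ordinal m_gt1) isT.
by move/disjointFr/(_ (ucA _)); rewrite ucA.
Qed.

Lemma g_connected_tree_packing1 S : g_connected e -> tree_packing e S 1.
Proof.
move=> conn.
have subE : is_subgraph e setT (gedges e).
  by rewrite /is_subgraph subxx; apply/forall_inP => f _; apply: subsetT.
have connE : sg_connected setT (gedges e).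
  apply/sg_connectedP => x y _ _; rewrite (eq_connect edge_rel_gedges).
  exact: forallP (forallP conn x) y.
have [F _ /and3P[subF connF acF]] := connected_subgraph_tree subE connE.
apply/tree_packingP; exists (fun=> (setT, F)); split=> [i|i j].
  by rewrite /is_Stree subF connF acF subsetT.
by rewrite !ord1 eqxx.
Qed.

Lemma g_connected_lamk_G_gt0 k : g_connected e -> 1 < #|T| -> 0 < lamk_G e k.
Proof.
move=> conn /card_gt1P[x [y [_ _ xy]]].
have [w xw] := connect_step (forallP (forallP conn x) y) xy.
have E_gt0 : 0 < #|gedges e| by apply/card_gt0P; exists [set x; w]; rewrite mem_gedges.
apply: (le_bigmin (T := nat)) => // S _.
exact: leq_lamS_G (g_connected_tree_packing1 S conn) E_gt0.
Qed.

End Packings.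

Definition star (n : nat) : rel 'I_n := fun x y => (val x == 0) (+) (val y == 0).
Arguments star : clear implicits.

Lemma star_sym n : symmetric (star n).
Proof. by move=> x y; rewrite /star addbC. Qed.

Lemma star_irr n : irreflexive (star n).
Proof. by move=> x; rewrite /star addbb. Qed.

Lemma star_connected n : 0 < n -> g_connected (star n).
Proof.
move=> n_gt0; pose c : 'I_n := Ordinal n_gt0.
have to_c x : connect (star n) x c.
  case: (eqVneq (val x) 0) => [x0|x0]; first by rewrite (_ : x = c) //; apply: val_inj.
  by apply: connect1; rewrite /star (negbTE x0).
apply/forallP => x; apply/forallP => y; apply: connect_trans (to_c x) _.
by rewrite (sym_connect_sym (@star_sym n)).
Qed.

Lemma star_lamk_D_le1 n k : 2 <= k <= n -> lamk_D (star n) k <= 1.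
Proof.
case/andP => k_ge2 k_le_n; have k_gt0 := ltnW k_ge2.
pose S := [set widen_ord k_le_n i | i : 'I_k].
have S_card : #|S| == k.
  by rewrite card_imset ?card_ord // => i j /(congr1 val) ij; apply: val_inj.
pose c := widen_ord k_le_n (Ordinal k_gt0); pose u := widen_ord k_le_n (Ordinal k_ge2).
apply: leq_trans (bigmin_le_cond (T := nat) _ _ S_card) _.
apply: (pendant_lamS_D_le1 (u := u) (v := c) (c := c)); rewrite ?imset_f // => w.
by rewrite /star /= => /eqP w0; apply: val_inj.
Qed.

Lemma star_lamk_D_eq_G n k : 2 <= k <= n -> lamk_D (star n) k = lamk_G (star n) k.
Proof.
move=> kn; have n_gt1 : 1 < n by case/andP: kn; apply: leq_trans.
apply/eqP; rewrite eqn_leq lamk_G_le_D ?andbT; last exact: star_sym.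
apply: leq_trans (star_lamk_D_le1 kn) (g_connected_lamk_G_gt0 _ _ _ _ _) => //.
- exact: star_sym.
- exact: star_irr.
- exact: star_connected (ltnW n_gt1).
- by rewrite card_ord.
Qed.

Theorem theorem4p6 :
  (* lambda_k(symmetric digraph of G) >= lambda_k(G) for 2 <= k <= n *)
  (forall (T : finType) (e : rel T), symmetric e -> irreflexive e ->
     forall k : nat, 2 <= k <= #|T| -> lamk_G e k <= lamk_D e k)
  /\
  (* sharpness: for every n and 2 <= k <= n some (connected) graph of
     order n attains equality *)
  (forall n k : nat, 2 <= k <= n ->
     exists e : rel 'I_n, [/\ symmetric e, irreflexive e, g_connected e &
       lamk_D e k = lamk_G e k])
  /\
  (* lambda_2(symmetric digraph of G) = lambda_2(G) *)
  (forall (T : finType) (e : rel T), symmetric e -> irreflexive e ->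
     2 <= #|T| -> lamk_D e 2 = lamk_G e 2).
Proof.
split; first by move=> T e e_sym _ k _; apply: lamk_G_le_D.
split; last by move=> T e e_sym e_irr; apply: lamk_D2.
move=> n k kn; have n_gt0 : 0 < n by case/andP: kn => /ltnW; apply: leq_trans.
exists (star n); split; [exact: star_sym | exact: star_irr | exact: star_connected |].
exact: star_lamk_D_eq_G.
Qed.
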